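(* Let $G=(V,E)$ be a DAG with $n=|V|$ nodes that is $(e,d)$-reducible. Then $\Pi^{BW}_{cc}(G)\le\frac{e(e+1)}{2}+dn$. In particular, for every constant $\Delta$ there is a constant $C$ such that every DAG $G$ on $n\ge 3$ nodes with maximum indegree at most $\Delta$ satisfies $\Pi^{BW}_{cc}(G)\le C\left(\frac{n\log\log n}{\log n}\right)^2$.
   Context: For a DAG $G$, $\mathsf{depth}(G)$ is the number of nodes on a longest directed path; $G-S$ is $G$ with the nodes of $S$ and incident edges removed. $G$ is $(e,d)$-reducible if there is $S\subseteq V$ with $|S|\le e$ and $\mathsf{depth}(G-S)\le d$. A parallel-black sequential-white pebbling of $G=(V,E)$ is a sequence $P=(P_0,\ldots,P_t)$ of pairs $P_i=(P_i^B,P_i^W)$ of subsets of $V$ such that: $P_0=(\emptyset,\emptyset)$; $P_t^W=\emptyset$; $|P_i^W\setminus P_{i-1}^W|\le1$ for all $i\in[t]$; for all $i\in[t]$, if $x\in P_{i-1}^W\setminus P_i^W$ then $\mathsf{parents}(x)\subseteq P_{i-1}^W\cup P_{i-1}^B$; for all $i\in[t]$, if $x\in P_i^B\setminus P_{i-1}^B$ then $\mathsf{parents}(x)\subseteq P_{i-1}^W\cup P_{i-1}^B$; and every sink $x$ of $G$ lies in $P_z^W\cup P_z^B$ for some $z\le t$. $\Pi^{BW}_{cc}(G)=\min_P\sum_{i=1}^t|P_i^B\cup P_i^W|$ over all such pebblings. *)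

From Stdlib Require Import Reals.
From mathcomp Require Import all_boot.
Set Implicit Arguments. Unset Strict Implicit. Unset Printing Implicit Defensive.

Definition dag (V : finType) (E : rel V) : Prop :=
  forall (x : V) (p : seq V), path E x p -> x \notin p.

Definition parents (V : finType) (E : rel V) (v : V) : {set V} :=
  [set u | E u v].

Definition is_sink (V : finType) (E : rel V) (v : V) : bool :=
  [forall w, ~~ E v w].

(* depth(G - S) <= d : every directed path of G all of whose nodes avoid S
   has at most d nodes. *)
Definition depth_minus_le (V : finType) (E : rel V) (S : {set V}) (d : nat) : Prop :=
  forall (x : V) (p : seq V), path E x p -> all (fun v => v \notin S) (x :: p) ->
    size (x :: p) <= d.

Definition reducible (V : finType) (E : rel V) (e d : nat) : Prop :=
  exists S : {set V}, #|S| <= e /\ depth_minus_le E S d.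

(* A parallel-black sequential-white pebbling P = (P_0,...,P_t), given by
   the length t and the maps i |-> P_i^B, i |-> P_i^W. *)
Definition bw_pebbling (V : finType) (E : rel V) (t : nat)
    (PB PW : nat -> {set V}) : Prop :=
  [/\ PB 0 = set0 /\ PW 0 = set0 /\ PW t = set0,
      (forall i, 1 <= i <= t -> #|PW i :\: PW i.-1| <= 1),
      (forall i, 1 <= i <= t -> forall x, x \in PW i.-1 :\: PW i ->
          parents E x \subset PW i.-1 :|: PB i.-1),
      (forall i, 1 <= i <= t -> forall x, x \in PB i :\: PB i.-1 ->
          parents E x \subset PW i.-1 :|: PB i.-1)
    & (forall x, is_sink E x -> exists z, z <= t /\ x \in PW z :|: PB z)].

Definition bw_cost (V : finType) (t : nat) (PB PW : nat -> {set V}) : nat :=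
  \sum_(1 <= i < t.+1) #|PB i :|: PW i|.

(* Pi^BW_cc(G) <= b  (Pi^BW_cc is a minimum over pebblings, which always
   exist, so this is exactly "some pebbling has cost <= b"). *)
Definition ccBW_le (V : finType) (E : rel V) (b : nat) : Prop :=
  exists t PB PW, @bw_pebbling V E t PB PW /\ bw_cost t PB PW <= b.

Definition ccBW_leR (V : finType) (E : rel V) (b : R) : Prop :=
  exists t PB PW, @bw_pebbling V E t PB PW /\ Rle (INR (bw_cost t PB PW)) b.

(* Pebble the nodes of S white one at a time (cost at most 1 + 2 + ... + e),
   then, keeping S white, black-pebble G - S in parallel by depth: after d
   rounds every node is pebbled, each round costing at most n.

   For indegree at most Delta, Valiant's depth reduction produces such an S:
   label the nodes by topological rank r-bit numbers, give every edge the
   position of the highest bit where the labels of its endpoints differ, and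
   delete the heads of the edges whose position is in the least frequent class
   modulo k.  Along a remaining path the labels already differ on the bits
   outside that class, so d <= 2^(r - r/k), while e <= Delta n / k.  With
   r ~ log n and r/k ~ 2 log r this gives e ~ n log log n / log n and
   d ~ n / log^2 n. *)

From Stdlib Require Import Reals Lra Psatz.
From mathcomp Require Import all_boot zify.
Set Implicit Arguments. Unset Strict Implicit. Unset Printing Implicit Defensive.

Lemma ccBW_leW (V : finType) (E : rel V) (b b' : nat) :
  ccBW_le E b -> b <= b' -> ccBW_le E b'.
Proof.
by move=> [t [PB [PW [HP Hc]]]] bb'; exists t, PB, PW; split; last exact: leq_trans bb'.
Qed.

Lemma triangular_sum k : \sum_(1 <= i < k.+1) i = k * (k + 1) %/ 2.
Proof.
by rewrite -[LHS]add0n -(@big_ltn _ _ _ 0 k.+1 id) // bin2_sum bin2 divn2 mulnC addn1.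
Qed.

Lemma card_set_take_succD (T : finType) (s : seq T) i :
  #|[set x in take i.+1 s] :\: [set x in take i s]| <= 1.
Proof.
rewrite -addn1 takeD.
have sub : [set x in take i s ++ take 1 (drop i s)] :\: [set x in take i s]
             \subset [set x in take 1 (drop i s)].
  by apply/subsetP => x; rewrite !inE mem_cat => /andP[/negbTE ->].
apply: leq_trans (subset_leq_card sub) _; rewrite cardsE.
by apply: leq_trans (card_size _) _; rewrite size_take; case: ltnP.
Qed.

Lemma set_take_subset (T : finType) (s : seq T) i j :
  i <= j -> [set x in take i s] \subset [set x in take j s].
Proof. by move=> ij; apply/subsetP => x; rewrite !inE -(take_takel s ij) => /mem_take. Qed.

Section LayeredPebbling.
Variables (V : finType) (E : rel V) (S : {set V}) (d : nat).

Definition settled (X : {set V}) : {set V} :=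
  [set v | (v \notin S) && (parents E v \subset S :|: X)].

(* The nodes of [G - S] at depth at most [j]. *)
Definition layer j := iter j settled set0.

Lemma layer_path j v : v \notin S -> v \notin layer j ->
  exists x p, [/\ path E x p, all (fun w => w \notin S) (x :: p), last x p = v
                 & j < size (x :: p)].
Proof.
elim: j v => [|j IHj] v vS vj; first by exists v, [::]; rewrite /= vS.
have /subsetPn[u] : ~~ (parents E v \subset S :|: layer j).
  by move: vj; rewrite /layer /= inE vS.
rewrite !inE negb_or => Euv /andP[uS uj].
have [x [p [Hp Ha Hl Hs]]] := IHj u uS uj.
exists x, (rcons p v); split.
- by rewrite rcons_path Hp Hl Euv.
- by rewrite -rcons_cons all_rcons Ha vS.
- by rewrite last_rcons.
- by rewrite /= size_rcons; move: Hs => /=; lia.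
Qed.

Hypothesis depthS : depth_minus_le E S d.

Lemma mem_layer_depth v : v \in S :|: layer d.
Proof.
rewrite inE; case: (boolP (v \in S)) => //= vS; apply/negPn/negP => vd.
have [x [p [Hp Ha _ Hs]]] := layer_path vS vd.
by have := depthS Hp Ha; rewrite leqNgt Hs.
Qed.

Definition whites i : {set V} :=
  if i <= #|S| + d then [set x in take i (enum S)] else set0.

Definition blacks i : {set V} := if i <= #|S| + d then layer (i - #|S|) else set0.

Lemma set_take_enum_full i : #|S| <= i -> [set x in take i (enum S)] = S.
Proof.
by move=> Si; apply/setP => x; rewrite inE take_oversize ?mem_enum // -cardE.
Qed.

Lemma layered_pebbling : bw_pebbling E (#|S| + d).+1 blacks whites.
Proof.
have whitesE i : i <= #|S| + d -> whites i = [set x in take i (enum S)].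
  by move=> i_le; rewrite /whites i_le.
have blacksE i : i <= #|S| + d -> blacks i = layer (i - #|S|).
  by move=> i_le; rewrite /blacks i_le.
have whites_full : whites (#|S| + d) = S.
  by rewrite whitesE // set_take_enum_full ?leq_addr.
have blacks_full : blacks (#|S| + d) = layer d by rewrite blacksE // addKn.
have whites_last : whites (#|S| + d).+1 = set0 by rewrite /whites ltnn.
have blacks_last : blacks (#|S| + d).+1 = set0 by rewrite /blacks ltnn.
split.
- by rewrite whites_last /blacks /whites /= take0; split=> //; apply/setP => x; rewrite !inE.
- move=> [//|i] /andP[_]; rewrite ltnS leq_eqVlt => /orP[/eqP-> /=|i_lt].
    by rewrite whites_last set0D cards0.
  by rewrite /= !whitesE ?(ltnW i_lt) //; apply: card_set_take_succD.
- move=> [//|i] /andP[_]; rewrite ltnS leq_eqVlt => /orP[/eqP-> /=|i_lt] x.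
    by rewrite whites_full blacks_full => _; apply/subsetP => y _; apply: mem_layer_depth.
  rewrite /= !whitesE ?(ltnW i_lt) // inE => /andP[/negP xi1 xi].
  by case: xi1; apply: (subsetP (set_take_subset _ (leqnSn i))).
- move=> [//|i] /andP[_]; rewrite ltnS leq_eqVlt => /orP[/eqP-> /=|i_lt] x.
    by rewrite blacks_last !inE andbF.
  rewrite /= !blacksE ?(ltnW i_lt) // inE; case: (ltnP i #|S|) => iS.
    by rewrite (_ : i.+1 - #|S| = 0) ?inE //; lia.
  rewrite (_ : i.+1 - #|S| = (i - #|S|).+1); last by lia.
  move=> /andP[_]; rewrite /layer /= inE => /andP[_].
  by rewrite whitesE ?(ltnW i_lt) // set_take_enum_full.
- by move=> x _; exists (#|S| + d); rewrite whites_full blacks_full; split => //; apply: mem_layer_depth.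
Qed.

Lemma layered_pebbling_cost :
  bw_cost (#|S| + d).+1 blacks whites <= #|S| * (#|S| + 1) %/ 2 + d * #|V|.
Proof.
rewrite /bw_cost big_nat_recr //= {2}/blacks {2}/whites ltnn setU0 cards0 addn0.
rewrite (@big_cat_nat _ _ _ #|S|.+1) ?ltnS ?leq_addr //=; apply: leq_add.
  rewrite -triangular_sum big_nat_cond [leqRHS]big_nat_cond.
  apply: leq_sum => i /andP[/andP[i1 iS] _].
  have iSd : i <= #|S| + d by lia.
  rewrite /blacks /whites iSd (_ : i - #|S| = 0) ?set0U ?cardsE; last by lia.
  by apply: leq_trans (card_size _) _; rewrite size_take; case: ltnP.
apply: (@leq_trans (\sum_(#|S|.+1 <= i < (#|S| + d).+1) #|V|)).
  by apply: leq_sum => i _; apply: max_card.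
by rewrite sum_nat_const_nat -addSn addKn.
Qed.

End LayeredPebbling.

Lemma ccBW_le_depth_minus (V : finType) (E : rel V) (S : {set V}) (d : nat) :
  depth_minus_le E S d -> ccBW_le E (#|S| * (#|S| + 1) %/ 2 + d * #|V|).
Proof.
move=> depthS; exists (#|S| + d).+1, (blacks E S d), (whites S d).
by split; [apply: layered_pebbling | apply: layered_pebbling_cost].
Qed.

Lemma ccBW_le_reducible (V : finType) (E : rel V) (e d : nat) :
  reducible E e d -> ccBW_le E (e * (e + 1) %/ 2 + d * #|V|).
Proof.
case=> S [Se depthS]; apply: ccBW_leW (ccBW_le_depth_minus depthS) _.
by rewrite leq_add2r leq_div2r // leq_mul // leq_add2r.
Qed.

Lemma ccBW_le_square (V : finType) (E : rel V) : ccBW_le E (#|V| * #|V|).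
Proof.
have depthV : depth_minus_le E [set: V] 0 by move=> x p _ /andP[]; rewrite inE.
apply: ccBW_leW (ccBW_le_depth_minus depthV) _.
by rewrite cardsT mul0n addn0 -ltnS ltn_divLR //; nia.
Qed.

(* Position of the most significant bit, among the [f] lowest ones, at which
   [a] and [b] differ; [0] when they agree on those bits. *)
Fixpoint diff_bit (f a b : nat) : nat :=
  if f is f'.+1 then (if a./2 == b./2 then 0 else (diff_bit f' a./2 b./2).+1) else 0.

Lemma diff_bit_max f a b c : a <= b -> b <= c ->
  diff_bit f a c = maxn (diff_bit f a b) (diff_bit f b c).
Proof.
elim: f a b c => [|f IHf] a b c ab bc //=.
have h1 := half_leq ab; have h2 := half_leq bc.
case: eqP => [Eac|Nac].
  have Eab : a./2 = b./2 by lia.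
  have Ebc : b./2 = c./2 by lia.
  by rewrite Eab Ebc eqxx.
case: eqP => [Eab|Nab]; case: eqP => [Ebc|Nbc].
- by case: Nac; rewrite Eab Ebc.
- by rewrite Eab max0n.
- by rewrite -Ebc maxn0.
- by rewrite (IHf a./2 b./2 c./2) // maxnSS.
Qed.

Lemma diff_bit_odd f a b : a < 2 ^ f -> b < 2 ^ f -> a != b ->
  odd (a %/ 2 ^ diff_bit f a b) != odd (b %/ 2 ^ diff_bit f a b).
Proof.
elim: f a b => [|f IHf] a b ha hb nab /=.
  by move: ha hb nab; rewrite expn0; case: a => //; case: b.
case: (a./2 =P b./2) => [E|N].
  rewrite expn0 !divn1; apply: contra nab => /eqP Eo.
  by rewrite -[a]odd_double_half -[b]odd_double_half E Eo.
rewrite expnS !divnMA !divn2; apply: IHf; last by apply/eqP.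
  by rewrite -divn2 ltn_divLR // mulnC -expnS.
by rewrite -divn2 ltn_divLR // mulnC -expnS.
Qed.

Lemma diff_bit_lt f a b : a < 2 ^ f -> b < 2 ^ f -> a != b -> diff_bit f a b < f.
Proof.
elim: f a b => [|f IHf] a b ha hb nab /=.
  by move: ha hb nab; rewrite expn0; case: a => //; case: b.
case: eqP => // N; rewrite ltnS; apply: IHf; last by apply/eqP.
  by rewrite -divn2 ltn_divLR // mulnC -expnS.
by rewrite -divn2 ltn_divLR // mulnC -expnS.
Qed.

Lemma exists_mul_le_sum k (F : 'I_k -> nat) : 0 < k ->
  exists c, k * F c <= \sum_(i < k) F i.
Proof.
move=> k0; have [c _ Fmin] := arg_minnP F (isT : predT (Ordinal k0)).
exists c; rewrite -[X in X * _](card_ord k) -sum_nat_const.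
by apply: leq_sum => i _; apply: Fmin.
Qed.

Lemma card_ord_modn_neq r k (c : 'I_k) :
  #|[set i : 'I_r | i %% k != c]| <= r - r %/ k.
Proof.
have k0 : 0 < k by case: c => c'; case: k => // _ /ltn0.
set T := [set i : 'I_r | i %% k == c].
have bound (q : 'I_(r %/ k)) : c + k * q < r.
  apply: leq_trans (leq_divM r k); rewrite [_ * k]mulnC.
  apply: leq_trans (_ : k * q.+1 <= _); last by rewrite leq_mul2l ltn_ord orbT.
  by rewrite mulnS [c + _]addnC [k + _]addnC ltn_add2l.
pose f (q : 'I_(r %/ k)) : 'I_r := Ordinal (bound q).
have f_inj : injective f.
  by move=> q1 q2 /(congr1 val) /= /addnI /eqP; rewrite eqn_mul2l eqn0Ngt k0 => /eqP/val_inj.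
have rkT : r %/ k <= #|T|.
  rewrite -[X in X <= _](card_ord (r %/ k)) -(card_imset _ f_inj).
  apply/subset_leq_card/subsetP => _ /imsetP[q _ ->].
  by rewrite inE /= addnC mulnC modnMDl modn_small.
have := cardsC T; rewrite card_ord (_ : ~: T = [set i : 'I_r | i %% k != c]); first by lia.
by apply/setP => i; rewrite !inE.
Qed.

Lemma depth_minus_leW (V : finType) (E : rel V) (S : {set V}) d d' :
  depth_minus_le E S d -> d <= d' -> depth_minus_le E S d'.
Proof. by move=> depthS dd' x p pth allS; apply: leq_trans (depthS x p pth allS) dd'. Qed.

Section TopologicalRank.
Variables (V : finType) (E : rel V).
Hypothesis dagE : dag E.

Lemma dag_edge_not_back u v : connect E v u -> ~~ E u v.
Proof.
case/connectP => p pth lst; apply/negP => Euv.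
have := dagE (x := v) (p := rcons p v).
by rewrite rcons_path pth -lst Euv mem_rcons inE eqxx => /(_ isT).
Qed.

Definition ancestors v := [set u | (u != v) && connect E u v].

Definition topo_rank v := #|ancestors v|.

Lemma topo_rank_edge u v : E u v -> topo_rank u < topo_rank v.
Proof.
move=> Euv; apply/proper_card/properP; split.
  apply/subsetP => w; rewrite !inE => /andP[_ cwu].
  rewrite (connect_trans cwu (connect1 Euv)) andbT.
  by apply/eqP => wv; have := dag_edge_not_back cwu; rewrite wv Euv.
exists u; last by rewrite inE eqxx.
rewrite inE connect1 // andbT; apply/eqP => uv; move: Euv; rewrite uv.
exact/negP/dag_edge_not_back/connect0.
Qed.

Lemma topo_rank_lt_card v : topo_rank v < #|V|.
Proof.
rewrite -cardsT; apply/proper_card/properP; split; first exact: subsetT.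
by exists v; rewrite ?inE ?eqxx.
Qed.

Section BitPatterns.
Variables (r : nat) (A : {set 'I_r}) (S : {set V}).
Hypothesis topo_rank_small : forall v, topo_rank v < 2 ^ r.

Definition in_bits h := [exists i in A, val i == h].

Hypothesis edge_in_bits :
  forall u v, E u v -> v \notin S -> in_bits (diff_bit r (topo_rank u) (topo_rank v)).

Lemma path_in_bits x p : path E x p -> all (fun w => w \notin S) p ->
  forall y, y \in p ->
    topo_rank x < topo_rank y /\ in_bits (diff_bit r (topo_rank x) (topo_rank y)).
Proof.
elim: p x => [|z p IHp] x //= /andP[Exz pz] /andP[zS aS] y.
rewrite inE => /orP[/eqP -> |yp]; first by split; [apply: topo_rank_edge | apply: edge_in_bits].
have [lzy gzy] := IHp z pz aS y yp.
have lxz := topo_rank_edge Exz.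
split; first exact: ltn_trans lzy.
rewrite (diff_bit_max _ (ltnW lxz) (ltnW lzy)).
by case: leqP => _ //; apply: edge_in_bits.
Qed.

Definition bit_pattern z := [set i in A | odd (topo_rank z %/ 2 ^ i)].

Lemma bit_pattern_neq x y : topo_rank x < topo_rank y ->
  in_bits (diff_bit r (topo_rank x) (topo_rank y)) -> bit_pattern x != bit_pattern y.
Proof.
move=> lxy /existsP[i /andP[iA /eqP hi]].
have := diff_bit_odd (topo_rank_small x) (topo_rank_small y) (negbT (ltn_eqF lxy)).
rewrite -hi; apply: contra => /eqP pe.
by have := congr1 (fun B : {set 'I_r} => i \in B) pe; rewrite /= !inE iA /= => ->.
Qed.

Lemma uniq_bit_patterns x p : path E x p -> all (fun w => w \notin S) p ->
  uniq (map bit_pattern (x :: p)).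
Proof.
elim: p x => [|z p IHp] x //= /andP[Exz pz] /andP[zS aS].
rewrite /= in IHp; rewrite IHp // andbT inE negb_or.
have xzp : path E x (z :: p) by rewrite /= Exz.
have azp : all (fun w => w \notin S) (z :: p) by rewrite /= zS.
apply/andP; split.
  by apply: bit_pattern_neq (topo_rank_edge Exz) (edge_in_bits Exz zS).
apply/mapP => -[y yp /eqP]; apply/negP.
have yzp : y \in z :: p by rewrite inE yp orbT.
have [lxy gxy] := path_in_bits xzp azp yzp.
exact: bit_pattern_neq lxy gxy.
Qed.

Lemma depth_minus_le_bit_patterns : depth_minus_le E S (2 ^ #|A|).
Proof.
move=> x p pth /andP[_ aS].
rewrite -(size_map bit_pattern) -card_powerset cardE.
apply: uniq_leq_size; first exact: uniq_bit_patterns.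
move=> B /mapP[z _ ->]; rewrite mem_enum powersetE.
by apply/subsetP => i; rewrite inE => /andP[].
Qed.

End BitPatterns.

Lemma depth_reduction Delta r k : (forall v, #|parents E v| <= Delta) ->
  #|V| <= 2 ^ r -> 0 < k ->
  exists S : {set V}, k * #|S| <= Delta * #|V| /\ depth_minus_le E S (2 ^ (r - r %/ k)).
Proof.
move=> indeg Vr k0.
have rank_small v : topo_rank v < 2 ^ r by apply: leq_trans (topo_rank_lt_card v) Vr.
pose heads (c : 'I_k) :=
  [set v | [exists u, E u v && (diff_bit r (topo_rank u) (topo_rank v) %% k == c)]].
have sum_heads : \sum_(c < k) #|heads c| <= Delta * #|V|.
  rewrite mulnC -sum_nat_const.
  rewrite (eq_bigr (fun c => \sum_(v in heads c) 1)); last by move=> c _; rewrite sum1_card.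
  rewrite (exchange_big_dep predT) //=; apply: leq_sum => v _.
  rewrite sum1dep_card; apply: leq_trans (indeg v).
  pose cls u : 'I_k := Ordinal (ltn_pmod (diff_bit r (topo_rank u) (topo_rank v)) k0).
  apply: leq_trans (leq_imset_card cls (parents E v)).
  apply/subset_leq_card/subsetP => c; rewrite !inE => /existsP[u /andP[Euv /eqP hc]].
  by apply/imsetP; exists u; rewrite ?inE //; apply: val_inj.
have [c small_c] := exists_mul_le_sum (fun c => #|heads c|) k0.
exists (heads c); split; first exact: leq_trans sum_heads.
pose A := [set i : 'I_r | i %% k != c].
apply: (@depth_minus_leW _ _ _ (2 ^ #|A|)); last first.
  by rewrite leq_pexp2l ?card_ord_modn_neq.
apply: (depth_minus_le_bit_patterns rank_small) => u v Euv vc.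
have hlt : diff_bit r (topo_rank u) (topo_rank v) < r.
  by rewrite diff_bit_lt ?rank_small ?(negbT (ltn_eqF (topo_rank_edge Euv))).
apply/existsP; exists (Ordinal hlt); rewrite inE /= eqxx andbT.
by apply: contra vc => hc; rewrite inE; apply/existsP; exists u; rewrite Euv hc.
Qed.

End TopologicalRank.

Lemma valiant_cost_bound Delta n r j e : 0 < j <= r -> 2 ^ r <= 2 * n -> r ^ 2 <= 2 ^ j ->
  r %/ j * e <= Delta * n ->
  (e * (e + 1) %/ 2 + 2 ^ (r - r %/ (r %/ j)) * n) * r ^ 2 <=
    (4 * j ^ 2 * Delta ^ 2 + 2) * n ^ 2.
Proof.
move=> /andP[j0 jr] rn rj ke; set k := r %/ j; set d := 2 ^ (r - r %/ k).
have k0 : 0 < k by rewrite divn_gt0.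
have er : e * r <= 2 * j * (Delta * n).
  apply: leq_trans (_ : e * (2 * k * j) <= _).
    rewrite leq_mul2l; apply/orP; right; apply: ltnW; apply: leq_trans (ltn_ceil r j0) _.
    by rewrite leq_mul2r -addn1 mul2n -addnn leq_add2l k0 orbT.
  by rewrite (_ : e * _ = 2 * j * (k * e)) ?leq_mul2l ?ke ?orbT //; lia.
have dr : d * r ^ 2 <= 2 * n.
  apply: leq_trans rn; apply: leq_trans (_ : d * 2 ^ (r %/ k) <= _).
    rewrite leq_mul2l (leq_trans rj) ?orbT // leq_pexp2l // leq_divRL //.
    by rewrite mulnC leq_divM.
  by rewrite -expnD subnK // leq_div.
have ee : e * (e + 1) %/ 2 <= e * e.
  by rewrite -ltnS ltn_divLR //; nia.
apply: leq_trans (_ : (e * e + d * n) * r ^ 2 <= _); first by rewrite leq_mul2r leq_add2r ee orbT.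
rewrite -!mulnn (_ : _ * (r * r) = e * r * (e * r) + d * (r * r) * n); last by lia.
rewrite (_ : _ * (n * n) = 2 * j * (Delta * n) * (2 * j * (Delta * n)) + 2 * n * n); last by lia.
by apply: leq_add; [exact: leq_mul | rewrite leq_mul2r mulnn dr orbT].
Qed.

Lemma ccBW_le_valiant (V : finType) (E : rel V) Delta r j : dag E ->
  (forall v, #|parents E v| <= Delta) -> #|V| <= 2 ^ r <= 2 * #|V| -> 0 < j <= r ->
  r ^ 2 <= 2 ^ j ->
  exists b, ccBW_le E b /\ b * r ^ 2 <= (4 * j ^ 2 * Delta ^ 2 + 2) * #|V| ^ 2.
Proof.
move=> dagE indeg /andP[Vr rV] jr rj.
have k0 : 0 < r %/ j by case/andP: jr => j0 jr; rewrite divn_gt0.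
have [S [small_S depthS]] := depth_reduction dagE indeg Vr k0.
exists (#|S| * (#|S| + 1) %/ 2 + 2 ^ (r - r %/ (r %/ j)) * #|V|).
by split; [apply: ccBW_le_depth_minus | apply: valiant_cost_bound].
Qed.

Lemma linear_le_pow2 l : (3 <= l -> 2 * l + 2 <= 2 ^ l)%N.
Proof.
elim: l => // l IHl; rewrite leq_eqVlt => /orP[/eqP <- //|]; rewrite ltnS => /IHl h.
by rewrite expnS; lia.
Qed.

Section Asymptotics.
Local Open Scope R_scope.

Lemma INR_addn a b : INR (a + b)%N = INR a + INR b.
Proof. by rewrite -plusE plus_INR. Qed.

Lemma INR_muln a b : INR (a * b)%N = INR a * INR b.
Proof. by rewrite -multE mult_INR. Qed.

Lemma INR_expn a m : INR (a ^ m)%N = INR a ^ m.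
Proof. by elim: m => [|m IHm] //=; rewrite expnS INR_muln IHm. Qed.

Lemma INR_leq a b : (a <= b)%N -> INR a <= INR b.
Proof. by move/leP; apply: le_INR. Qed.

Lemma INR_ltn a b : (a < b)%N -> INR a < INR b.
Proof. by move/ltP; apply: lt_INR. Qed.

Lemma ccBW_leR_of_le (V : finType) (E : rel V) (b : nat) (x : R) :
  ccBW_le E b -> INR b <= x -> ccBW_leR E x.
Proof.
move=> [t [PB [PW [HP Hb]]]] bx; exists t, PB, PW; split => //.
exact: Rle_trans (INR_leq Hb) bx.
Qed.

Lemma ccBW_leR_le (V : finType) (E : rel V) (x y : R) :
  ccBW_leR E x -> x <= y -> ccBW_leR E y.
Proof.
by move=> [t [PB [PW [HP Hx]]]] xy; exists t, PB, PW; split => //; apply: Rle_trans xy.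
Qed.

Lemma ln_le x y : 0 < x -> x <= y -> ln x <= ln y.
Proof.
move=> x0; case/Rle_lt_or_eq_dec => [xy|->]; last exact: Rle_refl.
exact/Rlt_le/ln_increasing.
Qed.

Lemma ln3_gt1 : 1 < ln 3.
Proof.
(* [exp (-1) > 1/3] from [exp x > 1 + x] at [x = -1/8] and three squarings *)
have exp_m8 : 7/8 < exp (-1/8) by have := exp_ineq1 (-1/8) ltac:(lra); lra.
have sq4 : exp (-1/4) = exp (-1/8) * exp (-1/8) by rewrite -exp_plus; f_equal; lra.
have sq2 : exp (-1/2) = exp (-1/4) * exp (-1/4) by rewrite -exp_plus; f_equal; lra.
have sq1 : exp (-1) = exp (-1/2) * exp (-1/2) by rewrite -exp_plus; f_equal; lra.
have exp_m4 : 49/64 < exp (-1/4) by rewrite sq4; nra.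
have exp_m2 : 2401/4096 < exp (-1/2) by rewrite sq2; nra.
have exp_m1 : 1/3 < exp (-1) by rewrite sq1; nra.
have exp_inv : exp 1 * exp (-1) = 1 by rewrite -exp_plus (_ : 1 + -1 = 0) ?exp_0 //; lra.
have exp1_lt3 : exp 1 < 3 by have := exp_pos 1; nra.
by rewrite -(ln_exp 1); apply: ln_increasing => //; apply: exp_pos.
Qed.

Lemma INR_expn2 m : INR (2 ^ m) = 2 ^ m.
Proof. by rewrite INR_expn. Qed.

Lemma pow2_le_ln m x : INR (2 ^ m) <= x -> INR m <= 2 * ln x.
Proof.
rewrite INR_expn2 => mx; have p0 : 0 < 2 ^ m by apply: pow_lt; lra.
have := ln_le p0 mx; rewrite ln_pow; last lra.
have := ln_lt_2; have := pos_INR m; nra.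
Qed.

Lemma ln_lt_pow2 m x : 0 < x -> x < INR (2 ^ m) -> ln x < INR m.
Proof.
rewrite INR_expn2 => x0 xm; have := ln_increasing _ _ x0 xm; rewrite ln_pow; last lra.
have ln2 : ln 2 < 1 by rewrite -[X in _ < X]ln_exp; apply: ln_increasing; have := exp_ineq1 1; lra.
have := pos_INR m; nra.
Qed.

Lemma scaled_square_bound (c r N LL Ln J D : R) : 0 < Ln <= r -> 0 <= c ->
  c * r ^ 2 <= (4 * J ^ 2 * D ^ 2 + 2) * N ^ 2 -> 0 <= J <= 10 * LL -> 1 <= LL ->
  c <= (400 * D ^ 2 + 2) * (N * LL / Ln) ^ 2.
Proof.
move=> [Ln0 Lnr] c0 cr [J0 JL] LL1.
have cLn : c * Ln ^ 2 <= c * r ^ 2 by apply: Rmult_le_compat_l => //; apply: pow_incr; lra.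
have J2 : J ^ 2 <= 100 * LL ^ 2 by nra.
have JD2 : J ^ 2 * D ^ 2 <= 100 * LL ^ 2 * D ^ 2.
  by apply: Rmult_le_compat_r => //; apply: pow2_ge_0.
have JD : 4 * J ^ 2 * D ^ 2 + 2 <= (400 * D ^ 2 + 2) * LL ^ 2 by nra.
have NJD : (4 * J ^ 2 * D ^ 2 + 2) * N ^ 2 <= (400 * D ^ 2 + 2) * LL ^ 2 * N ^ 2.
  by apply: Rmult_le_compat_r => //; nra.
have e : (N * LL / Ln) ^ 2 * Ln ^ 2 = LL ^ 2 * N ^ 2 by field; lra.
apply: (Rmult_le_reg_r (Ln ^ 2)); first by nra.
by rewrite Rmult_assoc e; lra.
Qed.

Lemma ln_ln3_pos : 0 < ln (ln 3).
Proof. by rewrite -ln_1; apply: ln_increasing; [lra | apply: ln3_gt1]. Qed.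

Definition loglog_ratio (n : nat) : R := INR n * ln (ln (INR n)) / ln (INR n).

Lemma loglog_ratio_ge (n : nat) : (3 <= n)%N -> ln (ln 3) <= loglog_ratio n.
Proof.
move=> n3; have N3 : 3 <= INR n by have := INR_leq n3; rewrite /= ; lra.
have ln3 := ln3_gt1; have ll3 := ln_ln3_pos.
have Ln3 : ln 3 <= ln (INR n) by apply: ln_le; lra.
have LL3 : ln (ln 3) <= ln (ln (INR n)) by apply: ln_le; lra.
have LnN : ln (INR n) < INR n by have := exp_ineq1_le (ln (INR n)); rewrite exp_ln; lra.
rewrite /loglog_ratio /Rdiv Rmult_assoc (Rmult_comm (ln _)) -Rmult_assoc.
have : 1 <= INR n * / ln (INR n).
  apply: (Rmult_le_reg_r (ln (INR n))); first lra.
  by rewrite Rmult_assoc Rinv_l; lra.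
nra.
Qed.

Lemma ccBW_leR_small (V : finType) (E : rel V) : (3 <= #|V|)%N ->
  (trunc_log 2 (trunc_log 2 #|V|).+1 < 4)%N ->
  ccBW_leR E (2 ^ 30 / ln (ln 3) ^ 2 * loglog_ratio #|V| ^ 2).
Proof.
move=> n3 l3; apply: ccBW_leR_of_le (ccBW_le_square E) _.
have n_small : (#|V| < 2 ^ 15)%N.
  have r_small : ((trunc_log 2 #|V|).+1 < 2 ^ 4)%N.
    by apply: leq_trans (@trunc_log_ltn 2 _ isT) _; rewrite leq_pexp2l.
  by apply: leq_trans (@trunc_log_ltn 2 _ isT) _; rewrite leq_pexp2l.
have nn : INR (#|V| * #|V|) <= 2 ^ 30.
  by rewrite -INR_expn2; apply: INR_leq; rewrite (expnD 2 15 15) leq_mul // ltnW.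
have ll3 := ln_ln3_pos; have X3 := loglog_ratio_ge n3.
have e : 2 ^ 30 / ln (ln 3) ^ 2 * ln (ln 3) ^ 2 = 2 ^ 30 by field; lra.
apply: Rle_trans nn _; rewrite -{1}e; apply: Rmult_le_compat_l.
  by apply: Rmult_le_pos; [lra | apply/Rlt_le/Rinv_0_lt_compat/pow_lt].
by apply: pow_incr; lra.
Qed.

Lemma ccBW_leR_large (V : finType) (E : rel V) Delta : dag E ->
  (forall v, #|parents E v| <= Delta)%N -> (3 <= #|V|)%N ->
  (4 <= trunc_log 2 (trunc_log 2 #|V|).+1)%N ->
  ccBW_leR E ((400 * INR Delta ^ 2 + 2) * loglog_ratio #|V| ^ 2).
Proof.
move=> dagE indeg n3 l4.
set n := #|V| in n3 l4 *; set L := trunc_log 2 n in l4 *.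
set l := trunc_log 2 L.+1 in l4 *; have l2n : (2 <= l)%N := ltnW (ltnW l4).
have n_lt : (n < 2 ^ L.+1)%N := @trunc_log_ltn 2 n isT.
have L_le : (2 ^ L <= n)%N := @trunc_logP 2 n isT (ltnW (ltnW n3)).
have l_le : (2 ^ l <= L.+1)%N := @trunc_logP 2 L.+1 isT (ltn0Sn _).
have l_lt : (L.+1 < 2 ^ l.+1)%N := @trunc_log_ltn 2 L.+1 isT.
have r_bounds : (n <= 2 ^ L.+1 <= 2 * n)%N by rewrite ltnW //= expnS leq_mul2l L_le.
have j_le : (0 < 2 * l + 2 <= L.+1)%N.
  by rewrite addn2 /=; apply: leq_trans l_le; rewrite -addn2 linear_le_pow2 // ltnW.
have rj : (L.+1 ^ 2 <= 2 ^ (2 * l + 2))%N.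
  rewrite (_ : 2 * l + 2 = l.+1 * 2)%N; last by lia.
  by rewrite expnM leq_exp2r // ltnW.
have [b [cc_b b_le]] := ccBW_le_valiant dagE indeg r_bounds j_le rj.
apply: ccBW_leR_of_le cc_b _.
have INR2 : INR 2 = 2 by rewrite /=; lra.
have INR4 : INR 4 = 4 by rewrite /=; lra.
move/INR_leq: b_le; rewrite !(INR_muln, INR_expn, INR_addn) INR2 INR4 => b_le.
have N3 : 3 <= INR n by have := INR_leq n3; rewrite (_ : INR 3 = 3) //=; lra.
have Ln0 : 0 < ln (INR n) by rewrite -ln_1; apply: ln_increasing; lra.
have Lnr : ln (INR n) <= INR L.+1 by apply/Rlt_le/ln_lt_pow2; [lra | apply: INR_ltn].
have lL : (2 * 2 ^ (l - 2) <= L)%N.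
  have : (2 ^ l = 4 * 2 ^ (l - 2))%N by rewrite -[in LHS](subnKC l2n) expnD.
  have : (0 < 2 ^ (l - 2))%N by rewrite expn_gt0.
  lia.
have LLl : INR (l - 2) <= 2 * ln (ln (INR n)).
  apply: pow2_le_ln; have := pow2_le_ln (INR_leq L_le).
  have := INR_leq lL; rewrite INR_muln INR2; lra.
have l2 : 2 <= INR (l - 2) by rewrite -INR2; apply: INR_leq; rewrite leq_subRL.
have Ll : INR l = INR (l - 2) + 2 by rewrite -INR2 -INR_addn subnK.
by apply: (scaled_square_bound (conj Ln0 Lnr) (pos_INR b) b_le); lra.
Qed.

Lemma ccBW_leR_loglog (V : finType) (E : rel V) Delta : dag E ->
  (forall v, #|parents E v| <= Delta)%N -> (3 <= #|V|)%N ->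
  ccBW_leR E ((400 * INR Delta ^ 2 + 2 + 2 ^ 30 / ln (ln 3) ^ 2) * loglog_ratio #|V| ^ 2).
Proof.
move=> dagE indeg n3; have X2 := pow2_ge_0 (loglog_ratio #|V|).
have A0 := pow2_ge_0 (INR Delta).
have B0 : 0 <= 2 ^ 30 / ln (ln 3) ^ 2.
  by apply: Rmult_le_pos; [lra | apply/Rlt_le/Rinv_0_lt_compat/pow_lt/ln_ln3_pos].
case: (leqP 4 (trunc_log 2 (trunc_log 2 #|V|).+1)) => l.
  by apply: ccBW_leR_le (ccBW_leR_large dagE indeg n3 l) _; nra.
by apply: ccBW_leR_le (ccBW_leR_small E n3 l) _; nra.
Qed.

End Asymptotics.

Theorem mainTheorem14 :
  (forall (V : finType) (E : rel V) (e d : nat),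
      dag E -> reducible E e d ->
      ccBW_le E ((e * (e + 1)) %/ 2 + d * #|V|)) /\
  (forall Delta : nat, exists C : R,
      forall (V : finType) (E : rel V),
        dag E -> 3 <= #|V| -> (forall v : V, #|parents E v| <= Delta) ->
        ccBW_leR E
          (Rmult C (pow (Rdiv (Rmult (INR #|V|) (ln (ln (INR #|V|)))) (ln (INR #|V|))) 2))).
Proof.
split=> [V E e d _|Delta]; first exact: ccBW_le_reducible.
by eexists => V E dagE n3 indeg; apply: ccBW_leR_loglog.
Qed.
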